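(* Let $G$ be a graph. (i) Every self-locating-dominating code in $G$ is a $2$-dominating set of $G$. (ii) If the girth of $G$ is at least $5$, then every $2$-dominating set of $G$ is a self-locating-dominating code of $G$.
   Context: All graphs are finite, simple and undirected (not necessarily connected). For $u\in V$, $N(u)$ is the set of neighbours of $u$ and $N[u]=N(u)\cup\{u\}$. A code is a non-empty subset $C\subseteq V$; $I(C;u)=N[u]\cap C$. A code $C$ is self-locating-dominating if for every $u\in V\setminus C$ we have $I(C;u)\neq\emptyset$ and $\bigcap_{c\in I(C;u)}N[c]=\{u\}$. A set $S\subseteq V$ is $2$-dominating if $|N[u]\cap S|\ge 2$ for every $u\in V\setminus S$. The girth is the length of a shortest cycle; acyclic graphs have infinite girth. *)

From mathcomp Require Import all_boot.
Set Implicit Arguments. Unset Strict Implicit. Unset Printing Implicit Defensive.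

Definition simple_graph (T : finType) (e : rel T) : Prop :=
  symmetric e /\ irreflexive e.

Definition nbhd (T : finType) (e : rel T) (u : T) : {set T} := [set v | e u v].
Definition cnbhd (T : finType) (e : rel T) (u : T) : {set T} := u |: nbhd e u.

Definition Iset (T : finType) (e : rel T) (C : {set T}) (u : T) : {set T} :=
  cnbhd e u :&: C.

Definition bigcap_cnbhd (T : finType) (e : rel T) (S : {set T}) : {set T} :=
  [set v | [forall c in S, v \in cnbhd e c]].

Definition is_code (T : finType) (C : {set T}) : Prop := C != set0.

Definition self_locating_dominating (T : finType) (e : rel T) (C : {set T}) : Prop :=
  is_code C /\
  forall u, u \notin C ->
    Iset e C u != set0 /\ bigcap_cnbhd e (Iset e C u) = [set u].

Definition two_dominating (T : finType) (e : rel T) (S : {set T}) : Prop :=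
  forall u, u \notin S -> 2 <= #|cnbhd e u :&: S|.

Definition is_graph_cycle (T : finType) (e : rel T) (s : seq T) : Prop :=
  3 <= size s /\ uniq s /\ cycle e s.

(* girth >= g : every cycle has length at least g (acyclic: infinite girth) *)
Definition girth_ge (T : finType) (e : rel T) (g : nat) : Prop :=
  forall s : seq T, is_graph_cycle e s -> g <= size s.

(* A self-locating-dominating code must meet N[u] twice outside the code:
   if I(C;u) = {c}, the intersection of the N[c'] is N[c], which contains
   c <> u.  Conversely, two distinct neighbours c1, c2 of u have N[c1] ∩ N[c2]
   = {u} unless there is a triangle or a 4-cycle through u, so girth at least
   5 makes every 2-dominating set self-locating-dominating. *)
From mathcomp Require Import all_boot.
Set Implicit Arguments. Unset Strict Implicit. Unset Printing Implicit Defensive.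

Lemma in_cnbhd (T : finType) (e : rel T) u v :
  (v \in cnbhd e u) = (v == u) || e u v.
Proof. by rewrite /cnbhd /nbhd !inE. Qed.

Lemma bigcap_cnbhd1 (T : finType) (e : rel T) c :
  bigcap_cnbhd e [set c] = cnbhd e c.
Proof.
apply/setP => v; rewrite inE; apply/forall_inP/idP => [|vc x].
  by apply; rewrite inE.
by rewrite inE => /eqP ->.
Qed.

Lemma self_locating_dominating_two_dominating (T : finType) (e : rel T)
    (C : {set T}) :
  self_locating_dominating e C -> two_dominating e C.
Proof.
move=> [_ sldC] u uC; have [/set0Pn [c cI] capI] := sldC u uC.
rewrite ltnNge; apply/negP => I_le1.
have /cards1P [c' I1] : #|Iset e C u| == 1.
  by rewrite eqn_leq I_le1; apply/card_gt0P; exists c.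
have c'u : c' = u.
  apply/set1P; by rewrite -capI I1 bigcap_cnbhd1 in_cnbhd eqxx.
have : c' \in Iset e C u by rewrite I1 set11.
by rewrite c'u !inE (negbTE uC) andbF.
Qed.

Lemma Iset_adj (T : finType) (e : rel T) (S : {set T}) u c :
  u \notin S -> c \in Iset e S u -> e u c.
Proof.
move=> uS; rewrite inE in_cnbhd => /andP [/orP [/eqP cu | //] cS].
by rewrite -cu cS in uS.
Qed.

Section GirthFive.

Variables (T : finType) (e : rel T).
Hypotheses (esym : symmetric e) (eirr : irreflexive e) (girth5 : girth_ge e 5).

Lemma adj_neq x y : e x y -> x != y.
Proof. by apply: contraTneq => ->; rewrite eirr. Qed.

Lemma no_triangle a b c : e a b -> e b c -> e c a -> False.
Proof.
move=> ab bc ca; suff /girth5 : is_graph_cycle e [:: a; b; c] by [].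
rewrite /is_graph_cycle /= !inE !negb_or (eq_sym a c).
by rewrite !adj_neq // ab bc ca.
Qed.

Lemma no_square a b c d :
  a != c -> b != d -> e a b -> e b c -> e c d -> e d a -> False.
Proof.
move=> ac bd ab bc cd da; suff /girth5 : is_graph_cycle e [:: a; b; c; d] by [].
rewrite /is_graph_cycle /= !inE !negb_or (eq_sym a d) ac bd.
by rewrite !adj_neq // ab bc cd da.
Qed.

Lemma cnbhdI_neighbours u c1 c2 :
  c1 != c2 -> e u c1 -> e u c2 -> cnbhd e c1 :&: cnbhd e c2 = [set u].
Proof.
move=> c12 uc1 uc2; apply/setP => v; rewrite in_setI in_set1 !in_cnbhd.
apply/idP/eqP => [|->]; last by rewrite -!(esym u) uc1 uc2 !orbT.
rewrite esym in uc2.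
case/andP=> /orP [/eqP-> | c1v] /orP [/eqP vc2 | c2v].
- by rewrite vc2 eqxx in c12.
- by rewrite esym in c2v; case: (no_triangle uc1 c2v uc2).
- by rewrite vc2 in c1v; case: (no_triangle uc1 c1v uc2).
- have [// | uv] := eqVneq u v; rewrite esym in c2v.
  by case: (no_square uv c12 uc1 c1v c2v uc2).
Qed.

Lemma two_dominating_self_locating_dominating (S : {set T}) :
  S != set0 -> two_dominating e S -> self_locating_dominating e S.
Proof.
move=> S0 twoS; split => // u uS.
have [c1 [c2 [c1I c2I c12]]] := card_gt1P (twoS u uS).
split; first by apply/set0Pn; exists c1.
apply/eqP; rewrite eqEsubset; apply/andP; split.
  rewrite -(cnbhdI_neighbours c12 (Iset_adj uS c1I) (Iset_adj uS c2I)).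
  apply/subsetP => v; rewrite inE => /forall_inP capv.
  by rewrite in_setI !capv.
apply/subsetP => v /set1P ->; rewrite inE; apply/forall_inP => c cI.
by rewrite in_cnbhd esym (Iset_adj uS cI) orbT.
Qed.

End GirthFive.

Theorem mainTheorem10 (T : finType) (e : rel T) (He : simple_graph e) :
  (forall C : {set T}, self_locating_dominating e C -> two_dominating e C) /\
  (girth_ge e 5 ->
   forall S : {set T}, S != set0 -> two_dominating e S ->
     self_locating_dominating e S).
Proof.
have [esym eirr] := He.
split; first exact: self_locating_dominating_two_dominating.
move=> girth5 S; exact: two_dominating_self_locating_dominating esym eirr girth5 S.
Qed.
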